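(* Let $\mathcal V,\mathcal W$ be complex topological vector spaces and let $\mathcal D\subseteq\mathcal V_{\rm nc}$, $\mathcal E\subseteq\mathcal W_{\rm nc}$ be noncommutative sets. Let $f\colon\mathcal D\to\mathcal E$ be a function such that (a) $f(a)\in\mathcal E_n$ for every $a\in\mathcal D_n$; (b) $f(a\oplus c)=f(a)\oplus f(c)$ for all $a\in\mathcal D_n,c\in\mathcal D_m$; (c) whenever $a\in\mathcal D_n,c\in\mathcal D_m,b\in\mathcal V^{n\times m}$ are such that $\begin{bmatrix}a&b\\0&c\end{bmatrix}\in\mathcal D_{n+m}$, there is an element $\Delta f(a,c)(b)\in\mathcal W^{n\times m}$, with $\Delta f(a,c)(tb)=t\Delta f(a,c)(b)$ for all $t\in[0,+\infty)$ for which $tb$ is in the domain of $\Delta f(a,c)(\cdot)$, such that $f\Big(\begin{bmatrix}a&b\\0&c\end{bmatrix}\Big)=\begin{bmatrix}f(a)&\Delta f(a,c)(b)\\0&f(c)\end{bmatrix}$. Then $\delta_{\mathcal D}(a,c)(b)\ge\delta_{\mathcal E}(f(a),f(c))(\Delta f(a,c)(b))$ for all $a\in\mathcal D_n$, $c\in\mathcal D_m$, $b\in\mathcal V^{n\times m}$.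
   Context: $\mathcal V^{n\times m}$ denotes $n\times m$ matrices over $\mathcal V$ with the product topology, $\mathcal V_{\rm nc}=\coprod_n\mathcal V^{n\times n}$. A noncommutative set is a family $\mathcal D=(\mathcal D_n)_{n\ge1}$ with $\mathcal D_n\subseteq\mathcal V^{n\times n}$ and $a\oplus c=\begin{bmatrix}a&0\\0&c\end{bmatrix}\in\mathcal D_{n+m}$ whenever $a\in\mathcal D_n,c\in\mathcal D_m$. For $a\in\mathcal D_n,c\in\mathcal D_m,b\in\mathcal V^{n\times m}$, $\delta_{\mathcal D}(a,c)(b)=\big[\sup\{t\in[0,+\infty]\colon\begin{bmatrix}a&sb\\0&c\end{bmatrix}\in\mathcal D_{n+m}\ \forall s\in[0,t]\}\big]^{-1}\in[0,+\infty]$, with $1/0=+\infty$ and $1/(+\infty)=0$; $\delta_{\mathcal D}(a,c)(sb)=s\,\delta_{\mathcal D}(a,c)(b)$ for $s>0$. Convention: if $\begin{bmatrix}a&sb\\0&c\end{bmatrix}\in\mathcal D_{n+m}$ only for small $s>0$, $\Delta f(a,c)(b)$ is defined by homogeneity as $s^{-1}\Delta f(a,c)(sb)$. *)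

From HB Require Import structures.
From mathcomp Require Import all_boot all_order all_algebra.
From mathcomp Require Import complex.
From mathcomp Require Import all_classical all_reals all_analysis.
Set Implicit Arguments. Unset Strict Implicit. Unset Printing Implicit Defensive.
Import Order.TTheory GRing.Theory Num.Theory.
Local Open Scope ring_scope.
Local Open Scope classical_set_scope.

(* Matrices over V: 'M[V]_(n, m).  A noncommutative set is a family
   D : forall n, set 'M[V]_n ; only the levels n >= 1 are meaningful
   (the level n = 0 is never used nor constrained). *)
Definition nc_set (V : nmodType) (D : forall n : nat, set 'M[V]_n) : Prop :=
  forall (n m : nat) (a : 'M[V]_n) (c : 'M[V]_m),
    (0 < n)%N -> (0 < m)%N -> D n a -> D m c ->
    D (n + m)%N (block_mx a 0 0 c).

Definition rscale (R : rcfType) (V : lmodType R[i]) (n m : nat) (t : R)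
  (b : 'M[V]_(n, m)) : 'M[V]_(n, m) :=
  map_mx (fun v : V => ((t%:C)%C : R[i]) *: v) b.

(* delta_D(a,c)(b) = [ sup { t in [0,+oo] | forall s in [0,t], [a sb; 0 c] in D } ]^-1
   with 1/0 = +oo and 1/(+oo) = 0 (this is exactly [inve]). *)
Definition nc_delta (R : realType) (V : lmodType R[i])
  (D : forall n : nat, set 'M[V]_n) (n m : nat)
  (a : 'M[V]_n) (c : 'M[V]_m) (b : 'M[V]_(n, m)) : \bar R :=
  ((ereal_sup [set t : \bar R | (0 <= t)%E /\
      forall s : R, (0 <= s)%R -> (s%:E <= t)%E ->
        D (n + m)%N (block_mx a (rscale s b) 0 c)%R])^-1)%E.

From HB Require Import structures.
From mathcomp Require Import all_boot all_order all_algebra.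
From mathcomp Require Import complex.
From mathcomp Require Import all_classical all_reals all_analysis.
Import Order.TTheory GRing.Theory Num.Theory.
Local Open Scope ring_scope.
Local Open Scope classical_set_scope.

(* By (c) and homogeneity, f maps every admissible block [a, t b; 0, c] of D
   to [f a, t Df(a,c)(b); 0, f c], which lies in E by (a).  So every t
   admissible for b in D is admissible for Df(a,c)(b) in E: the supremum
   defining delta_E dominates the one defining delta_D, and since a (+) c lies
   in D both suprema are >= 0, so inverting reverses the inequality. *)

Lemma rscaleA (R : rcfType) (V : lmodType R[i]) (n m : nat) (t u : R)
  (b : 'M[V]_(n, m)) : rscale t (rscale u b) = rscale (t * u) b.
Proof.
apply/matrixP => i j; rewrite /rscale !mxE scalerA; congr (_ *: _).
by apply/eqP; rewrite eq_complex /= !mulr0 !mul0r subr0 addr0 !eqxx.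
Qed.

Lemma rscale0 (R : rcfType) (V : lmodType R[i]) (n m : nat)
  (b : 'M[V]_(n, m)) : rscale 0 b = 0.
Proof.
apply/matrixP => i j; rewrite /rscale !mxE.
have -> : ((0 : R)%:C)%C = 0 :> R[i] by apply/eqP; rewrite eq_complex /= !eqxx.
by rewrite scale0r.
Qed.

Definition nc_admissible {R : realType} {V : lmodType R[i]}
  (D : forall n : nat, set 'M[V]_n) {n m : nat}
  (a : 'M[V]_n) (c : 'M[V]_m) (b : 'M[V]_(n, m)) : set (\bar R) :=
  [set t | (0 <= t)%E /\
     forall s : R, 0 <= s -> (s%:E <= t)%E -> D (n + m)%N (block_mx a (rscale s b) 0 c)].

Lemma nc_deltaE (R : realType) (V : lmodType R[i])
  (D : forall n : nat, set 'M[V]_n) (n m : nat)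
  (a : 'M[V]_n) (c : 'M[V]_m) (b : 'M[V]_(n, m)) :
  nc_delta D a c b = ((ereal_sup (nc_admissible D a c b))^-1)%E.
Proof. by []. Qed.

Lemma nc_admissible0 (R : realType) (V : lmodType R[i])
  (D : forall n : nat, set 'M[V]_n) (n m : nat)
  (a : 'M[V]_n) (c : 'M[V]_m) (b : 'M[V]_(n, m)) :
  D (n + m)%N (block_mx a 0 0 c) -> nc_admissible D a c b 0%E.
Proof.
move=> Dac; split => //= s s_ge0; rewrite lee_fin => s_le0.
have -> : s = 0 by apply/eqP; rewrite eq_le s_le0 s_ge0.
by rewrite rscale0.
Qed.

Lemma nc_delta_le_subset (R : realType) (V W : lmodType R[i])
  (D : forall n : nat, set 'M[V]_n) (E : forall n : nat, set 'M[W]_n) (n m : nat)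
  (a : 'M[V]_n) (c : 'M[V]_m) (b : 'M[V]_(n, m))
  (a' : 'M[W]_n) (c' : 'M[W]_m) (b' : 'M[W]_(n, m)) :
  D (n + m)%N (block_mx a 0 0 c) ->
  nc_admissible D a c b `<=` nc_admissible E a' c' b' ->
  (nc_delta E a' c' b' <= nc_delta D a c b)%E.
Proof.
move=> Dac sub; rewrite !nc_deltaE.
have supD_ge0 : (0 <= ereal_sup (nc_admissible D a c b))%E.
  exact/ereal_sup_ubound/nc_admissible0.
have supDE := ereal_sup_le sub.
by rewrite lee_pV2 ?inE //=; apply: le_trans supDE.
Qed.

Section NcMapDelta.

Variables (R : realType) (V W : lmodType R[i]).
Variables (D : forall n : nat, set 'M[V]_n) (E : forall n : nat, set 'M[W]_n).
Variable f : forall n : nat, 'M[V]_n -> 'M[W]_n.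
Variable Df : forall n m : nat, 'M[V]_n -> 'M[V]_m -> 'M[V]_(n, m) -> 'M[W]_(n, m).

Hypothesis f_in : forall (n : nat) (a : 'M[V]_n), (0 < n)%N -> D n a -> E n (f n a).
Hypothesis f_block : forall (n m : nat) (a : 'M[V]_n) (c : 'M[V]_m) (b : 'M[V]_(n, m)),
  (0 < n)%N -> (0 < m)%N -> D n a -> D m c -> D (n + m)%N (block_mx a b 0 c) ->
  f (n + m)%N (block_mx a b 0 c) = block_mx (f n a) (Df n m a c b) 0 (f m c).
Hypothesis Df_homo :
  forall {n m : nat} {a : 'M[V]_n} {c : 'M[V]_m} {b : 'M[V]_(n, m)} (t : R),
  (0 < n)%N -> (0 < m)%N -> D n a -> D m c -> D (n + m)%N (block_mx a b 0 c) ->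
  0 <= t -> D (n + m)%N (block_mx a (rscale t b) 0 c) ->
  Df n m a c (rscale t b) = rscale t (Df n m a c b).

Variables (n m : nat) (a : 'M[V]_n) (c : 'M[V]_m) (b : 'M[V]_(n, m)) (s : R).
Hypotheses (n_gt0 : (0 < n)%N) (m_gt0 : (0 < m)%N) (Da : D n a) (Dc : D m c).
Hypotheses (s_gt0 : 0 < s) (Dsb : D (n + m)%N (block_mx a (rscale s b) 0 c)).

Let Dfb := rscale s^-1 (Df n m a c (rscale s b)).

Lemma f_block_rscale (u : R) : 0 <= u ->
  D (n + m)%N (block_mx a (rscale u b) 0 c) ->
  f (n + m)%N (block_mx a (rscale u b) 0 c) = block_mx (f n a) (rscale u Dfb) 0 (f m c).
Proof.
move=> u_ge0 Dub.
have usb : rscale (u / s) (rscale s b) = rscale u b by rewrite rscaleA mulfVK ?gt_eqF.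
have := Df_homo (u / s) n_gt0 m_gt0 Da Dc Dsb (divr_ge0 u_ge0 (ltW s_gt0)).
by rewrite usb rscaleA => /(_ Dub) <-; apply: f_block.
Qed.

Lemma nc_admissible_map : nc_admissible D a c b `<=` nc_admissible E (f n a) (f m c) Dfb.
Proof.
move=> t [t_ge0 Dt]; split => // u u_ge0 u_le_t.
rewrite -f_block_rscale //; last exact: Dt.
by apply: f_in; [rewrite addn_gt0 n_gt0 | exact: Dt].
Qed.

End NcMapDelta.

Theorem proposition3p1 (R : realType) (V W : topologicalLmodType R[i])
  (D : forall n : nat, set 'M[V]_n) (E : forall n : nat, set 'M[W]_n)
  (f : forall n : nat, 'M[V]_n -> 'M[W]_n)
  (Df : forall n m : nat, 'M[V]_n -> 'M[V]_m -> 'M[V]_(n, m) -> 'M[W]_(n, m)) :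
  nc_set D -> nc_set E ->
  (* (a) *)
  (forall (n : nat) (a : 'M[V]_n), (0 < n)%N -> D n a -> E n (f n a)) ->
  (* (b) *)
  (forall (n m : nat) (a : 'M[V]_n) (c : 'M[V]_m),
     (0 < n)%N -> (0 < m)%N -> D n a -> D m c ->
     f (n + m)%N (block_mx a 0 0 c) = block_mx (f n a) 0 0 (f m c)) ->
  (* (c) *)
  (forall (n m : nat) (a : 'M[V]_n) (c : 'M[V]_m) (b : 'M[V]_(n, m)),
     (0 < n)%N -> (0 < m)%N -> D n a -> D m c ->
     D (n + m)%N (block_mx a b 0 c) ->
     f (n + m)%N (block_mx a b 0 c) = block_mx (f n a) (Df n m a c b) 0 (f m c)) ->
  (forall (n m : nat) (a : 'M[V]_n) (c : 'M[V]_m) (b : 'M[V]_(n, m)) (t : R),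
     (0 < n)%N -> (0 < m)%N -> D n a -> D m c ->
     D (n + m)%N (block_mx a b 0 c) -> 0 <= t ->
     D (n + m)%N (block_mx a (rscale t b) 0 c) ->
     Df n m a c (rscale t b) = rscale t (Df n m a c b)) ->
  (* conclusion, for every b; Delta f(a,c)(b) is taken by homogeneity as
     s^-1 Delta f(a,c)(s b) for any admissible s > 0 (s = 1 if b itself is
     admissible); if no s > 0 is admissible, delta_D(a,c)(b) = +oo and the
     inequality is trivial *)
  forall (n m : nat) (a : 'M[V]_n) (c : 'M[V]_m) (b : 'M[V]_(n, m)) (s : R),
    (0 < n)%N -> (0 < m)%N -> D n a -> D m c -> 0 < s ->
    D (n + m)%N (block_mx a (rscale s b) 0 c) ->
    (nc_delta E (f n a) (f m c) (rscale s^-1 (Df n m a c (rscale s b)))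
       <= nc_delta D a c b)%E.
Proof.
move=> ncD _ f_in _ f_block Df_homo n m a c b s n_gt0 m_gt0 Da Dc s_gt0 Dsb.
apply: nc_delta_le_subset; first exact: ncD.
exact: nc_admissible_map.
Qed.
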